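(* Let $P$ be a finite poset. If $I\subseteq P$ is a poset ideal, then $\mathfrak{p}(I)=(x_p)_{p\in I}\subseteq k[x_P]$ is a $P$-stable monomial prime ideal. Conversely every $P$-stable monomial prime ideal $\mathfrak{p}(S)=(x_p)_{p\in S}$, $S\subseteq P$, is of this form, i.e. $S$ is a poset ideal.
   Context: $k$ is a field and $k[x_P]$ the polynomial ring in variables $x_p$, $p\in P$. For $b\in P$, a $b$-chain is a multichain $C: p_1\le\dots\le p_r$ with $p_r\le b$; its length is $r$, $m_C=\prod x_{p_i}$; $C$ is in a monomial $m$ if $m_C\mid m$; a longest $b$-chain in $m$ is one of maximal length among $b$-chains in $m$; $C$ goes through $a$ if $a\le b$ and $a$ is comparable to every $p_i$. For an antichain $B$, $m_B=\prod_{b\in B}x_b$. A monomial ideal $I$ is $P$-stable if whenever $m=n\,m_B\in I$ ($n$ a monomial, $B$ an antichain) and $a\in P$ is such that for every $b\in B$ some longest $b$-chain in $m$ goes through $a$, then $n\,x_a\in I$. *)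

From HB Require Import structures.
From mathcomp Require Import all_boot all_order all_algebra.
From mathcomp Require Import mpoly.
Set Implicit Arguments. Unset Strict Implicit. Unset Printing Implicit Defensive.
Import Order.TTheory GRing.Theory.
Local Open Scope ring_scope.
Local Open Scope order_scope.

Section PStable.
Variables (k : fieldType) (disp : Order.disp_t) (P : finPOrderType disp).

Definition kxP := {mpoly k[#|P|]}.
Definition var (p : P) : kxP := 'X_(enum_rank p).

Definition mono (e : P -> nat) : kxP := \prod_(p : P) var p ^+ e p.

Definition mB (B : {set P}) : kxP := \prod_(b in B) var b.

Definition antichain (B : {set P}) : Prop :=
  forall x y, x \in B -> y \in B -> x <= y -> x = y.

Definition poset_ideal (S : {set P}) : Prop :=
  forall x y, y \in S -> x <= y -> x \in S.

Definition bchain (b : P) (C : seq P) : Prop :=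
  sorted <=%O C /\ last b C <= b.

(* C is in the monomial with exponent function e: m_C divides it *)
Definition chain_in (e : P -> nat) (C : seq P) : Prop :=
  forall p, (count_mem p C <= e p)%N.

Definition longest_bchain_in (e : P -> nat) (b : P) (C : seq P) : Prop :=
  [/\ bchain b C, chain_in e C &
      forall C', bchain b C' -> chain_in e C' -> (size C' <= size C)%N].

Definition goes_through (a b : P) (C : seq P) : Prop :=
  a <= b /\ all (fun p => (a <= p) || (p <= a)) C.

(* P-stability of a (monomial) ideal I, given as a predicate on k[x_P].
   For m = n * m_B, the exponent function of m is  p |-> n p + [p \in B]. *)
Definition P_stable (I : kxP -> Prop) : Prop :=
  forall (n : P -> nat) (B : {set P}) (a : P),
    antichain B ->
    I (mono n * mB B) ->
    (forall b, b \in B ->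
       exists C, longest_bchain_in (fun p => (n p + (p \in B))%N) b C
                 /\ goes_through a b C) ->
    I (mono n * var a).

Definition pideal (S : {set P}) (f : kxP) : Prop :=
  exists c : P -> kxP, f = \sum_(p in S) c p * var p.

Definition prime_ideal (I : kxP -> Prop) : Prop :=
  [/\ I 0,
      forall f g, I f -> I g -> I (f + g),
      forall f g, I g -> I (f * g),
      ~ I 1 &
      forall f g, I (f * g) -> I f \/ I g].

(* I is a monomial ideal: generated by monomials, i.e. a polynomial lies in I
   iff each of its terms does. *)
Definition monomial_ideal (I : kxP -> Prop) : Prop :=
  forall f : kxP, I f <-> (forall m, m \in msupp f -> I 'X_[m]).

End PStable.

(* The ideal (x_p)_{p in S} is the kernel of the substitution killing the
   variables x_p, p in S.  This substitution maps every monomial either to 0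
   or to itself, so its kernel is a monomial ideal, and it is prime because
   k[x_P] is a domain.  If S is down-closed and n m_B lies in the ideal, then
   by primality either n does, or x_b does for some b in B, i.e. b in S; a
   b-chain through a forces a <= b, so a in S.  Conversely, for x <= y in S,
   the only longest y-chain in x_y = 1 * m_{y} is (y), and it goes through x;
   P-stability then puts x_x in the ideal, i.e. x in S. *)

From HB Require Import structures.
From mathcomp Require Import all_boot all_order all_algebra.
From mathcomp Require Import mpoly.

Set Implicit Arguments. Unset Strict Implicit. Unset Printing Implicit Defensive.
Import Order.TTheory GRing.Theory.

Section KillVariables.
Variables (R : comNzRingType) (n : nat) (A : {set 'I_n}).
Local Open Scope ring_scope.
Implicit Types (f g : {mpoly R[n]}) (m : 'X_{1..n}).

Definition vars_ideal f : Prop :=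
  exists c : 'I_n -> {mpoly R[n]}, f = \sum_(i in A) c i * 'X_i.

Lemma vars_ideal0 : vars_ideal 0.
Proof. by exists (fun=> 0); rewrite big1 // => i _; rewrite mul0r. Qed.

Lemma vars_idealD f g : vars_ideal f -> vars_ideal g -> vars_ideal (f + g).
Proof.
move=> [c ->] [d ->]; exists (fun i => c i + d i).
by rewrite -big_split; apply: eq_bigr => i _; rewrite mulrDl.
Qed.

Lemma vars_idealMl f g : vars_ideal g -> vars_ideal (f * g).
Proof.
move=> [c ->]; exists (fun i => f * c i).
by rewrite mulr_sumr; apply: eq_bigr => i _; rewrite mulrA.
Qed.

Definition mnm_meets m := [exists i in A, 0 < m i]%N.

Lemma vars_idealX m : mnm_meets m -> vars_ideal 'X_[m].
Proof.
case/exists_inP => i iA mi_gt0.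
have -> : 'X_[m] = 'X_[m - U_(i)] * 'X_i :> {mpoly R[n]}.
  rewrite -mpolyXD; congr 'X_[_]; apply/mnmP => j.
  rewrite mnmDE mnmBE mnm1E; case: eqP => [<-|_]; last by rewrite subn0 addn0.
  by rewrite subnK.
apply: vars_idealMl; exists (fun j => (j == i)%:R).
by rewrite (bigD1 i) //= eqxx mul1r big1 ?addr0 // => j /andP[_ /negbTE->]; rewrite mul0r.
Qed.

Definition kill_vars : {mpoly R[n]} -> {mpoly R[n]} :=
  comp_mpoly [tuple if i \in A then 0 else 'X_i | i < n].

HB.instance Definition _ := GRing.RMorphism.copy kill_vars kill_vars.

Lemma kill_varsXU i : kill_vars 'X_i = if i \in A then 0 else 'X_i.
Proof. by rewrite /kill_vars comp_mpolyXU -tnth_nth tnth_mktuple. Qed.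

Lemma kill_varsX m : kill_vars 'X_[m] = if mnm_meets m then 0 else 'X_[m].
Proof.
rewrite /kill_vars comp_mpolyX; case: ifP => [/exists_inP[i iA mi_gt0] | meets_m].
  rewrite (bigD1 i) //= tnth_mktuple iA expr0n.
  by case: (m i) mi_gt0 => // ? _; rewrite mul0r.
rewrite [RHS]mpolyXE_id; apply: eq_bigr => i _; rewrite tnth_mktuple.
case: ifP => // iA; case mi: (m i) => [|j]; first by rewrite !expr0.
by move/negbT: meets_m => /exists_inPn /(_ i iA); rewrite mi.
Qed.

Lemma mcoeff_kill_vars f m0 :
  (kill_vars f)@_m0 = if mnm_meets m0 then 0 else f@_m0.
Proof.
have kill_coef m :
    (kill_vars 'X_[m])@_m0 = if mnm_meets m0 then 0 else 'X_[m]@_m0.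
  rewrite kill_varsX; have [<-|ne] := eqVneq m m0; first by case: ifP; rewrite ?mcoeff0.
  by case: ifP; rewrite ?mcoeff0 ?mcoeffX ?(negbTE ne) if_same.
rewrite [kill_vars f]comp_mpolyEX raddf_sum /=.
under eq_bigr do rewrite mcoeffZ kill_coef.
case: ifP => _; first by rewrite big1 // => m _; rewrite mulr0.
by rewrite [in RHS](mpolyE f) raddf_sum; apply: eq_bigr => m _; rewrite -mcoeffZ.
Qed.

Lemma kill_vars_eq0 f : (kill_vars f == 0) = all mnm_meets (msupp f).
Proof.
apply/eqP/allP => [kill_f m m_f | meets_supp].
  apply/contraT => /negbTE not_meets; have /eqP := congr1 (mcoeff m) kill_f.
  by rewrite mcoeff_kill_vars not_meets mcoeff0 mcoeff_eq0 m_f.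
apply/mpolyP => m; rewrite mcoeff_kill_vars mcoeff0; case: ifP => // not_meets.
by apply/memN_msupp_eq0; apply: contraFN not_meets; apply: meets_supp.
Qed.

Lemma vars_idealE f : vars_ideal f <-> kill_vars f = 0.
Proof.
split=> [[c ->] | /eqP].
  by rewrite rmorph_sum big1 // => i iA; rewrite rmorphM /= kill_varsXU iA mulr0.
rewrite kill_vars_eq0 => /allP meets_supp; rewrite (mpolyE f) big_seq.
apply: (big_ind vars_ideal vars_ideal0 vars_idealD) => m /meets_supp/vars_idealX.
by rewrite -mul_mpolyC; apply: vars_idealMl.
Qed.

End KillVariables.

Section VariableIdeals.
Variables (k : fieldType) (disp : Order.disp_t) (P : finPOrderType disp).
Local Open Scope ring_scope.
Local Open Scope order_scope.
Implicit Types (S : {set P}) (f : kxP k P).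

Lemma pideal_vars_ideal S f : pideal S f <-> vars_ideal (enum_rank @: S) f.
Proof.
have sum_ranks (c : 'I_#|P| -> kxP k P) :
    \sum_(i in enum_rank @: S) c i * 'X_i = \sum_(p in S) c (enum_rank p) * var k p.
  by rewrite big_imset //; exact: in2W enum_rank_inj.
split=> [[c ->] | [c ->]]; last by exists (c \o enum_rank); rewrite sum_ranks.
exists (c \o enum_val); rewrite sum_ranks.
by apply: eq_bigr => p _; rewrite /= enum_rankK.
Qed.

Lemma pidealE S f : pideal S f <-> kill_vars (enum_rank @: S) f = 0.
Proof. by rewrite pideal_vars_ideal vars_idealE. Qed.

Lemma pideal_var S p : pideal S (var k p) <-> p \in S.
Proof.
rewrite pidealE kill_varsXU mem_imset //; last exact: enum_rank_inj.
case: (p \in S); split=> // /eqP; by rewrite -msupp_eq0 msuppX.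
Qed.

Lemma pidealX S m : pideal S ('X_[m] : kxP k P) <-> mnm_meets (enum_rank @: S) m.
Proof. by rewrite pidealE (rwP eqP) kill_vars_eq0 msuppX /= andbT. Qed.

Lemma pideal_monomial S : monomial_ideal (@pideal k _ P S).
Proof.
move=> f; rewrite pidealE (rwP eqP) kill_vars_eq0.
split=> [/allP meets_supp m /meets_supp/pidealX // | supp_f].
by apply/allP => m /supp_f/pidealX.
Qed.

Lemma pideal_prime S : prime_ideal (@pideal k _ P S).
Proof.
split=> [|f g|f g|/pidealE|f g]; rewrite ?pidealE.
- exact: rmorph0.
- by rewrite rmorphD /= => -> ->; rewrite addr0.
- by rewrite rmorphM /= => ->; rewrite mulr0.
- by rewrite rmorph1; apply/eqP; exact: oner_neq0.
- by rewrite rmorphM => /eqP; rewrite mulf_eq0 => /orP[] /eqP; [left|right].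
Qed.

Lemma prime_ideal_prod (I : kxP k P -> Prop) (T : finType) (A : {set T}) F :
  prime_ideal I -> I (\prod_(i in A) F i) -> exists2 i, i \in A & I (F i).
Proof.
case=> _ _ _ not_I1 I_prime; elim/big_rec: _ => [/not_I1 // | i x iA IHx].
by case/I_prime => [|/IHx]; [exists i | ].
Qed.

Lemma poset_ideal_P_stable S : poset_ideal S -> P_stable (@pideal k _ P S).
Proof.
move=> S_down n B a _; have I_prime := pideal_prime S.
have [_ _ I_mul _ I_split] := I_prime.
case/I_split => [I_n _ | I_mB chains]; first by rewrite mulrC; apply: I_mul.
have [b bB /pideal_var bS] := prime_ideal_prod I_prime I_mB.
have [C [_ [ab _]]] := chains b bB.
by apply/I_mul/pideal_var/(S_down a b).
Qed.

Lemma mono0 : mono k (fun _ : P => 0%N) = 1.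
Proof. by rewrite /mono big1 // => p _; rewrite expr0. Qed.

Lemma mB_set1 (b : P) : mB k [set b] = var k b.
Proof. exact: big_set1. Qed.

(* The exponent vector of [mono 0 * mB [set b]]: [0 + e] reduces to [e]. *)
Lemma longest_bchain_in_set1 (b : P) :
  longest_bchain_in (fun p => nat_of_bool (p \in [set b])) b [:: b].
Proof.
split=> [|p|C _ C_in]; rewrite /= ?lexx ?in_set1 ?addn0 1?eq_sym //.
have C_b : all (pred1 b) C.
  apply/allP => p pC /=; apply/contraT => /negbTE pb; have := C_in p.
  by rewrite in_set1 pb leqn0 => /eqP/count_memPn; rewrite pC.
by rewrite all_count in C_b; rewrite -(eqP C_b); have := C_in b; rewrite in_set1 eqxx.
Qed.

Lemma P_stable_poset_ideal S : P_stable (@pideal k _ P S) -> poset_ideal S.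
Proof.
move=> stable x y yS xy; apply/pideal_var.
rewrite -[var k x]mul1r -mono0; apply: (stable _ [set y]).
- by move=> u v /set1P -> /set1P ->.
- by rewrite mono0 mul1r mB_set1; apply/pideal_var.
- move=> b /set1P ->; exists [:: y]; split; first exact: longest_bchain_in_set1.
  by split; rewrite //= xy.
Qed.

End VariableIdeals.

Theorem lemma3p17 (k : fieldType) (disp : Order.disp_t) (P : finPOrderType disp)
    (S : {set P}) :
  (poset_ideal S ->
     [/\ monomial_ideal (@pideal k _ P S), prime_ideal (@pideal k _ P S)
       & P_stable (@pideal k _ P S)]) /\
  (P_stable (@pideal k _ P S) -> poset_ideal S).
Proof.
split; last exact: P_stable_poset_ideal.
move=> S_down; split; [exact: pideal_monomial | exact: pideal_prime |].
exact: poset_ideal_P_stable.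
Qed.
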